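(* For all integers $n_1\ge 3$ and $n_2\ge 3$, $\lambda_3(P_{n_1}\circ P_{n_2})=n_2+1$, where $P_n$ denotes the path on $n$ vertices.
   Context: For a graph $G$ and $S\subseteq V(G)$ with $|S|\ge 2$, an $S$-tree is a subgraph of $G$ that is a tree containing all vertices of $S$; $\lambda(S)$ is the maximum number of pairwise edge-disjoint $S$-trees in $G$, and $\lambda_3(G)=\min\{\lambda(S): S\subseteq V(G),\ |S|=3\}$. The lexicographic product $G\circ H$ has vertex set $V(G)\times V(H)$, and $(u,v)$ is adjacent to $(u',v')$ iff either $uu'\in E(G)$, or $u=u'$ and $vv'\in E(H)$. *)

From mathcomp Require Import all_boot.
Set Implicit Arguments. Unset Strict Implicit. Unset Printing Implicit Defensive.

Section Graphs.
Variable T : finType.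
Variable adj : rel T.

(* A subgraph H = (VH, EH): VH a vertex set, EH a set of edges, each edge an
   unordered pair {x,y} represented by the 2-element set [set x; y]. *)
Definition subgraph (VH : {set T}) (EH : {set {set T}}) : Prop :=
  forall e, e \in EH ->
    exists x y, [/\ e = [set x; y], x != y, adj x y, x \in VH & y \in VH].

Definition hadj (EH : {set {set T}}) : rel T :=
  fun x y => (x != y) && ([set x; y] \in EH).

Definition h_connected (VH : {set T}) (EH : {set {set T}}) : Prop :=
  forall x y, x \in VH -> y \in VH -> connect (hadj EH) x y.

Definition h_acyclic (EH : {set {set T}}) : Prop :=
  ~ exists c : seq T, [/\ uniq c, 3 <= size c & cycle (hadj EH) c].

Definition is_tree (VH : {set T}) (EH : {set {set T}}) : Prop :=
  [/\ subgraph VH EH, VH != set0, h_connected VH EH & h_acyclic EH].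

Definition S_tree (S : {set T}) (H : {set T} * {set {set T}}) : Prop :=
  is_tree H.1 H.2 /\ S \subset H.1.

Definition has_disjoint_S_trees (S : {set T}) (k : nat) : Prop :=
  exists F : 'I_k -> {set T} * {set {set T}},
    (forall i, S_tree S (F i)) /\
    (forall i j, i != j -> [disjoint (F i).2 & (F j).2]).

Definition lambda_is (S : {set T}) (k : nat) : Prop :=
  has_disjoint_S_trees S k /\ forall k', has_disjoint_S_trees S k' -> k' <= k.

Definition lambda3_is (m : nat) : Prop :=
  (exists S : {set T}, #|S| = 3 /\ lambda_is S m) /\
  (forall (S : {set T}) k, #|S| = 3 -> lambda_is S k -> m <= k).

End Graphs.

Definition path_adj (n : nat) : rel 'I_n :=
  fun i j => (i.+1 == j :> nat) || (j.+1 == i :> nat).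
Arguments path_adj : clear implicits.

Definition lex_adj (A B : finType) (adjG : rel A) (adjH : rel B) : rel (A * B) :=
  fun p q => adjG p.1 q.1 || ((p.1 == q.1) && adjH p.2 q.2).

(* Upper bound: for S = {(0,0), (0,1), (0,2)}, edge-disjoint S-trees use
   distinct edges at (0,0), which has only n2 + 1 neighbours.

   Lower bound: for every 3-set S the edges are split into n2 + 1 disjoint
   labelled classes, each connecting S; pruning a minimal connecting subset
   of a class yields an S-tree.  Class t < n2 is a "spine" crossing all
   columns along row t (along row tau t beyond a gap g, tau swapping two rows
   a, b), plus one cross edge hanging each vertex of S onto the spine.  All
   remaining edges, vertical ones included, form class n2; it connects S as
   every gap between columns of S keeps a free cross edge.  The gap g and the
   rows a, b are chosen so that this also holds at g. *)

From mathcomp Require Import all_boot zify.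

Set Implicit Arguments.
Unset Strict Implicit.
Unset Printing Implicit Defensive.

Section SubgraphFacts.
Variable T : finType.
Implicit Types (F E : {set {set T}}) (S : {set T}) (x y z : T).

Lemma eq_set2 (a b c d : T) : [set a; b] = [set c; d] ->
  (a = c /\ b = d) \/ (a = d /\ b = c).
Proof.
move=> eab.
have /set2P ha : a \in [set c; d] by rewrite -eab set21.
have /set2P hb : b \in [set c; d] by rewrite -eab set22.
have /set2P hc : c \in [set a; b] by rewrite eab set21.
have /set2P hd : d \in [set a; b] by rewrite eab set22.
by case: ha hb hc hd => ha [] hb [] hc [] hd; subst; tauto.
Qed.

Lemma hadj_sym F : symmetric (hadj F).
Proof. by move=> x y; rewrite /hadj eq_sym setUC. Qed.

Lemma connect_transfer (R R' : rel T) z :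
  (forall u w, connect R z u -> R u w -> connect R' u w) ->
  forall v, connect R z v -> connect R' z v.
Proof.
move=> step v /connectP [p + ->].
suff walk u : connect R z u -> connect R' z u -> path R u p ->
    connect R' z (last u p) by apply: walk; apply: connect0.
elim: p u => [|w p IH] u zu zu' //= /andP [uw wp]; apply: IH wp.
- exact: connect_trans zu (connect1 uw).
- exact: connect_trans zu' (step _ _ zu uw).
Qed.

Lemma connect_del_far_edge F z x y :
  ~~ connect (hadj F) z x -> ~~ connect (hadj F) z y ->
  forall v, connect (hadj F) z v -> connect (hadj (F :\ [set x; y])) z v.
Proof.
move=> zx zy; apply: connect_transfer => u w zu /andP [uw uwF].
apply: connect1; rewrite /hadj uw !inE uwF andbT.
by apply/eqP => /eq_set2 [[ux _]|[uy _]]; [rewrite -ux zu in zx | rewrite -uy zu in zy].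
Qed.

Lemma connect_del_bypassed_edge F x y :
  connect (hadj (F :\ [set x; y])) x y ->
  forall z v, connect (hadj F) z v -> connect (hadj (F :\ [set x; y])) z v.
Proof.
move=> cxy z; apply: connect_transfer => u w _ /andP [uw uwF].
have [/eq_set2 [[-> ->]|[-> ->]] // | ne] := eqVneq [set u; w] [set x; y].
  by rewrite (sym_connect_sym (hadj_sym _)).
by apply: connect1; rewrite /hadj uw !inE ne.
Qed.

Lemma cycle_edge_bypassed F c0 c1 rest :
  uniq [:: c0, c1 & rest] -> rest != [::] ->
  cycle (hadj F) [:: c0, c1 & rest] ->
  connect (hadj (F :\ [set c0; c1])) c1 c0.
Proof.
rewrite /= rcons_path inE negb_or => /and3P [/andP [c01 c0r] c1r _] rest0.
case/and3P=> _ c1path lastc0.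
have keep u w : u != c0 -> w != c0 -> hadj F u w -> hadj (F :\ [set c0; c1]) u w.
  move=> u0 w0 /andP [uw uwF]; rewrite /hadj uw !inE uwF andbT.
  apply/eqP => /eq_set2 [[u0' _]|[_ w0']].
  - by rewrite u0' eqxx in u0.
  - by rewrite w0' eqxx in w0.
apply/connectP; exists (rcons rest c0); last by rewrite last_rcons.
rewrite rcons_path; apply/andP; split.
  apply: (sub_in_path (P := predC1 c0)) c1path => [u w|]; first exact: keep.
  by rewrite /= eq_sym c01 /=; apply/allP => u ur /=; apply: contraNneq c0r => <-.
move: lastc0; rewrite (hadj_sym F) => /andP [l0 l0F].
rewrite /hadj eq_sym l0 !inE setUC l0F andbT /=.
apply/eqP => /eq_set2 [[_ l1]|[c10 _]]; last by rewrite c10 eqxx in c01.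
case: (lastP rest) rest0 c1r l1 => [//|r l] _.
by rewrite last_rcons mem_rcons inE => /negP + l1; rewrite l1 eqxx.
Qed.

Definition reaches F z S : bool := [forall s in S, connect (hadj F) z s].

Lemma minimal_reaching_subset E z S : reaches E z S ->
  exists2 F : {set {set T}}, F \subset E &
    reaches F z S /\ forall e, e \in F -> ~~ reaches (F :\ e) z S.
Proof.
move=> Ez; pose P (F : {set {set T}}) := (F \subset E) && reaches F z S.
have PE : P E by rewrite /P subxx.
case: (arg_minnP (fun F => #|F|) PE) => F /andP [FE Fz] Fmin.
exists F => //; split=> // e eF; apply/negP => Fez.
have /Fmin : P (F :\ e) by rewrite /P Fez andbT (subset_trans (subsetDl F _) FE).
by rewrite (cardsD1 e F) eF ltnn.
Qed.

Section MinimalReaching.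
Variables (adj : rel T) (F : {set {set T}}) (z : T) (S : {set T}).
Hypothesis F_edges :
  forall e, e \in F -> exists x y, [/\ e = [set x; y], x != y & adj x y].
Hypothesis F_reaches : reaches F z S.
Hypothesis F_minimal : forall e, e \in F -> ~~ reaches (F :\ e) z S.

Lemma minimal_edge_ends e : e \in F -> exists x y,
  [/\ e = [set x; y], x != y, adj x y, connect (hadj F) z x & connect (hadj F) z y].
Proof.
move=> eF; have [x [y [exy xy axy]]] := F_edges eF.
have hxy : hadj F x y by rewrite /hadj xy -exy eF.
suff zx : connect (hadj F) z x.
  by exists x, y; split=> //; apply: connect_trans zx (connect1 hxy).
apply/negPn/negP => zx.
have zy : ~~ connect (hadj F) z y.
  apply: contra zx => zy; rewrite hadj_sym in hxy.
  exact: connect_trans zy (connect1 hxy).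
apply: (negP (F_minimal eF)); rewrite exy; apply/forall_inP => s sS.
exact: connect_del_far_edge zx zy _ (forall_inP F_reaches s sS).
Qed.

(* A minimal reaching set has no cycle: the first edge of a cycle could be
   dropped. *)
Lemma minimal_acyclic : h_acyclic F.
Proof.
case=> -[|c0 [|c1 rest]] [uc sc cc] //.
have rest0 : rest != [::] by case: rest sc {uc cc}.
have eF : [set c0; c1] \in F by case/andP: cc => /andP [].
apply: (negP (F_minimal eF)); apply/forall_inP => s sS.
apply: connect_del_bypassed_edge (forall_inP F_reaches s sS).
rewrite (sym_connect_sym (hadj_sym _)).
exact: cycle_edge_bypassed uc rest0 cc.
Qed.

End MinimalReaching.

Lemma S_tree_within (adj : rel T) E S z :
  (forall e, e \in E -> exists x y, [/\ e = [set x; y], x != y & adj x y]) ->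
  (forall s, s \in S -> connect (hadj E) z s) ->
  exists H, S_tree adj S H /\ H.2 \subset E.
Proof.
move=> E_edges Ez.
have [F FE [Fz Fmin]] : exists2 F : {set {set T}}, F \subset E &
    reaches F z S /\ forall e, e \in F -> ~~ reaches (F :\ e) z S.
  by apply: minimal_reaching_subset; apply/forall_inP.
have F_edges e : e \in F -> exists x y, [/\ e = [set x; y], x != y & adj x y].
  by move=> eF; apply: E_edges; apply: subsetP eF.
exists ([set v | connect (hadj F) z v], F); split=> //; split; last first.
  by apply/subsetP => s /(forall_inP Fz); rewrite inE.
split=> /=.
- move=> e eF; have [x [y [-> xy axy zx zy]]] := minimal_edge_ends F_edges Fz Fmin eF.
  by exists x, y; rewrite !inE.
- by apply/set0Pn; exists z; rewrite inE connect0.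
- move=> x y; rewrite !inE => zx zy; apply: connect_trans zy.
  by rewrite (sym_connect_sym (hadj_sym _)).
- exact: minimal_acyclic Fz Fmin.
Qed.

Lemma disjoint_S_trees_of_classes (adj : rel T) S k (C : 'I_k -> {set {set T}}) :
  (forall i j, i != j -> [disjoint C i & C j]) ->
  (forall i, exists H, S_tree adj S H /\ H.2 \subset C i) ->
  has_disjoint_S_trees adj S k.
Proof.
move=> Cdis /fin_all_exists [H HC]; exists H; split=> [i | i j ij].
  exact: (HC i).1.
exact: disjointWl (HC i).2 (disjointWr (HC j).2 (Cdis i j ij)).
Qed.

(* Degree bound: each S-tree contains an edge at c in S (S has a second
   vertex w), and edge-disjoint trees use distinct such edges; hence there
   are at most as many trees as neighbours of c. *)
Lemma disjoint_S_trees_le_degree (adj : rel T) S k c w (N : {set T}) :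
  symmetric adj -> c \in S -> w \in S -> c != w ->
  (forall u, adj c u -> u \in N) ->
  has_disjoint_S_trees adj S k -> k <= #|N|.
Proof.
move=> adj_sym cS wS cw cN [H [HS Hdis]].
have nb i : exists u, hadj (H i).2 c u.
  have [[_ _ Hconn _] SH] := HS i.
  have /connectP [[|u p] /= + ew] := Hconn c w (subsetP SH _ cS) (subsetP SH _ wS).
    by rewrite ew eqxx in cw.
  by case/andP=> cu _; exists u.
have [g gH] := fin_all_exists nb.
have g_edge i : [set c; g i] \in (H i).2 by case/andP: (gH i).
have g_inj : injective g.
  move=> i j gij; apply/eqP; apply: contraTT (g_edge j) => ij.
  by rewrite -gij (disjointFr (Hdis i j ij) (g_edge i)).
have gN i : g i \in N.
  have [[Hsub _ _ _] _] := HS i.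
  have [x [y [exy _ axy _ _]]] := Hsub _ (g_edge i).
  by apply: cN; case/eq_set2: exy => [[-> ->] | [-> ->]]; rewrite // adj_sym.
have : #|[set g i | i in 'I_k]| <= #|N|.
  by apply: subset_leq_card; apply/subsetP => u /imsetP [i _ ->].
by rewrite card_imset // card_ord.
Qed.

End SubgraphFacts.

Lemma ord_interval_ind n (P : 'I_n -> Prop) (i0 i1 : 'I_n) : i0 <= i1 -> P i0 ->
  (forall k k' : 'I_n, k.+1 = k' :> nat -> i0 <= k -> k' <= i1 -> P k -> P k') ->
  P i1.
Proof.
move=> le01 P0 step.
suff walk d (k : 'I_n) : k = i0 + d :> nat -> k <= i1 -> P k.
  by apply: (walk (i1 - i0)); lia.
elim: d k => [|d IH] k kd ki1.
  by have -> : k = i0 by apply: val_inj; rewrite /= kd addn0.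
have lt_n : i0 + d < n by have := ltn_ord k; lia.
by apply: (step (Ordinal lt_n)) => /=; [lia | lia | lia | apply: IH => /=; lia].
Qed.

Lemma connect_ord_walk n (T : finType) (R : rel T) (f : 'I_n -> T) :
  symmetric R -> (forall k k' : 'I_n, k.+1 = k' :> nat -> R (f k) (f k')) ->
  forall j j' : 'I_n, connect R (f j) (f j').
Proof.
move=> R_sym Rf.
have up (j j' : 'I_n) : j <= j' -> connect R (f j) (f j').
  move=> le; apply: (ord_interval_ind (P := fun k => connect R (f j) (f k))) le _ _.
    exact: connect0.
  by move=> k k' kk' _ _ c; apply: connect_trans c (connect1 (Rf _ _ kk')).
move=> j j'; have [/up // | /ltnW/up] := leqP j j'.
by rewrite (sym_connect_sym R_sym).
Qed.

(* Where to cut n >= 3 columns, given the columns cx, cy, cz of three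
   vertices: a gap g (between columns g and g+1) such that, if the gap has
   one of the columns on each side, no two of them lie in column g and no
   two lie in column g+1. *)
Lemma gap_position (n cx cy cz : nat) : 3 <= n -> cx < n -> cy < n -> cz < n ->
  exists g, g.+1 < n /\
   ((cx <= g \/ cy <= g \/ cz <= g) -> (g < cx \/ g < cy \/ g < cz) ->
    (~ (cx = g /\ cy = g) /\ ~ (cx = g /\ cz = g) /\ ~ (cy = g /\ cz = g)) /\
    (~ (cx = g.+1 /\ cy = g.+1) /\ ~ (cx = g.+1 /\ cz = g.+1) /\
        ~ (cy = g.+1 /\ cz = g.+1))).
Proof.
move=> n3 cxn cyn czn.
have [/and3P [x0 y0 z0] | not_all_pos] := boolP [&& 0 < cx, 0 < cy & 0 < cz].
  by exists (minn cx (minn cy cz)).-1; split; [lia | move=> *; exfalso; lia].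
have [/and3P [xl yl zl] | not_all_low] := boolP [&& cx < n.-1, cy < n.-1 & cz < n.-1].
  by exists (maxn cx (maxn cy cz)); split; [lia | move=> *; exfalso; lia].
move: not_all_pos not_all_low; rewrite !negb_and -!leqNgt => ? ?.
have [two_zero | ?] :=
  boolP [|| (cx == 0) && (cy == 0), (cx == 0) && (cz == 0) | (cy == 0) && (cz == 0)].
  by exists (n - 2); split; [lia | move: two_zero; lia].
by exists 0; split; lia.
Qed.

Section PathProduct.
Variables n1 n2 : nat.
Hypothesis n1_ge3 : 3 <= n1.
Hypothesis n2_ge3 : 3 <= n2.
Local Notation V := ('I_n1 * 'I_n2)%type.
Local Notation adjV := (lex_adj (path_adj n1) (path_adj n2)).

Lemma adjV_sym : symmetric adjV.
Proof.
move=> u v; rewrite /lex_adj /path_adj.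
by rewrite (orbC (u.1.+1 == v.1)) (eq_sym u.1) (orbC (u.2.+1 == v.2)).
Qed.

Lemma row_avoiding (p q : 'I_n2) : exists c : 'I_n2, c != p /\ c != q.
Proof.
have [r0 r1 r2] : [/\ 0 < n2, 1 < n2 & 2 < n2] by split; lia.
have [/andP [p0 q0] | pq0] := boolP ((p != 0 :> nat) && (q != 0 :> nat)).
  by exists (Ordinal r0); rewrite -!val_eqE /= !(eq_sym 0) p0 q0.
have [/andP [p1 q1] | pq1] := boolP ((p != 1 :> nat) && (q != 1 :> nat)).
  by exists (Ordinal r1); rewrite -!val_eqE /= !(eq_sym 1) p1 q1.
exists (Ordinal r2); rewrite -!val_eqE /=.
by move: pq0 pq1; rewrite !negb_and !negbK; split; apply/eqP; lia.
Qed.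

Section FixedS.
Variable S : {set V}.
Hypothesis S3 : #|S| = 3.

Definition lonely_column (c : nat) := forall u u' : V, u \in S -> u' \in S ->
  u.1 = c :> nat -> u'.1 = c :> nat -> u = u'.

Definition separates (i : nat) := (exists2 x : V, x \in S & x.1 <= i) /\
                                  (exists2 y : V, y \in S & i < y.1).

Lemma free_row (w : V) (i : 'I_n1) : w \in S -> w.1 != i ->
  exists j, (i, j) \notin S.
Proof.
move=> wS wi; apply/existsP; apply: contraFT (ltnn 3) => /existsPn col_in_S.
have col_inj : injective (fun j : 'I_n2 => (i, j)) by move=> j j' [].
have w_off : w \notin [set (i, j) | j in 'I_n2].
  by apply/imsetP => -[j _ wij]; rewrite wij eqxx in wi.
have : w |: [set (i, j) | j in 'I_n2] \subset S.
  apply/subsetP => u /setU1P [-> // | /imsetP [j _ ->]].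
  by rewrite -[_ \in S]negbK col_in_S.
move/subset_leq_card; rewrite cardsU1 w_off card_imset // card_ord S3.
by move=> ?; lia.
Qed.

Lemma lonely_row c : lonely_column c -> exists r : 'I_n2,
  forall u : V, u \in S -> u.1 = c :> nat -> u.2 = r.
Proof.
move=> lonely; have r0 : 0 < n2 by lia.
case: (pickP [pred u : V | (u \in S) && (u.1 == c :> nat)]) => [u0 | none].
  by case/andP=> u0S /eqP u0c; exists u0.2 => u uS uc; rewrite (lonely u u0).
by exists (Ordinal r0) => u uS uc; have := none u; rewrite /= uS uc eqxx.
Qed.

Lemma gap_choice : exists g, g.+1 < n1 /\
  (separates g -> lonely_column g /\ lonely_column g.+1).
Proof.
have /set0Pn [x xS] : S != set0 by rewrite -card_gt0 S3.
have /cards2P [y [z [yz Sx]]] : #|S :\ x| == 2.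
  by apply/eqP; move: S3; rewrite (cardsD1 x) xS /=; lia.
have eS : S = [set x; y; z].
  apply/setP => u; move/setP/(_ u): Sx; rewrite !inE.
  by have [-> | ux] /= := eqVneq u x; [rewrite xS | move=> ->].
have lonely3 c : ~ (x.1 = c :> nat /\ y.1 = c :> nat) ->
    ~ (x.1 = c :> nat /\ z.1 = c :> nat) -> ~ (y.1 = c :> nat /\ z.1 = c :> nat) ->
    lonely_column c.
  move=> xy xz yz' u1 u2; rewrite eS !inE -!orbA.
  move=> /or3P [] /eqP -> /or3P [] /eqP -> // e1 e2; exfalso;
  first [by apply: xy | by apply: xz | by apply: yz'].
have [g [gn gap]] := gap_position n1_ge3 (ltn_ord x.1) (ltn_ord y.1) (ltn_ord z.1).
exists g; split=> // -[[u uS ug] [v vS gv]].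
have left_of_gap : x.1 <= g \/ y.1 <= g \/ z.1 <= g.
  by move: uS ug; rewrite eS !inE -!orbA => /or3P [] /eqP -> ?; tauto.
have right_of_gap : g < x.1 \/ g < y.1 \/ g < z.1.
  by move: vS gv; rewrite eS !inE -!orbA => /or3P [] /eqP -> ?; tauto.
have [[? [? ?]] [? [? ?]]] := gap left_of_gap right_of_gap.
by split; apply: lonely3.
Qed.

(* The construction for a fixed gap g and rows a, b (see the opening
   comment): tau exchanges rows a and b, [spine i t] is the row of the spine
   of tree t in column i, and [next_row i j] the row following row j of
   column i along a spine. *)
Section Gap.
Variables (g : nat) (a b : 'I_n2).

Definition tau (j : 'I_n2) : 'I_n2 := if j == a then b else if j == b then a else j.
Definition spine (i : nat) (t : 'I_n2) : 'I_n2 := if i <= g then t else tau t.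
Definition next_row (i : nat) (j : 'I_n2) : 'I_n2 := if i == g then tau j else j.

Lemma tauK : involutive tau.
Proof.
move=> j; rewrite /tau.
have [-> | ja] := eqVneq j a; first by rewrite eqxx; case: eqVneq.
by have [-> | jb] := eqVneq j b; rewrite ?eqxx // (negbTE ja) (negbTE jb).
Qed.

Lemma spineK i : involutive (spine i).
Proof. by move=> t; rewrite /spine; case: leqP => // _; rewrite tauK. Qed.

Lemma next_row_spine i t : next_row i (spine i t) = spine i.+1 t.
Proof. by rewrite /next_row /spine; case: ltngtP. Qed.

Lemma next_row_inj i : injective (next_row i).
Proof. by rewrite /next_row; case: eqP => _ //; apply: can_inj tauK. Qed.

(* Label of a cross edge from u in column i to v in column i+1: the spine
   edge of tree t = spine i u.2 if it continues u's spine; an edge hanging a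
   vertex of S onto the spine of the neighbouring column (the next one at or
   before the gap, the previous one after it); otherwise the extra class n2. *)
Definition cross_label (u v : V) : nat :=
  if v.2 == next_row u.1 u.2 then spine u.1 u.2 : nat
  else if (u \in S) && (u.1 <= g) then spine v.1 v.2 : nat
  else if (v \in S) && (g < v.1) then spine u.1 u.2 : nat
  else n2.

Definition label (u v : V) : option nat :=
  if u.1.+1 == v.1 then Some (cross_label u v)
  else if v.1.+1 == u.1 then Some (cross_label v u)
  else if (u.1 == v.1) && ((u.2.+1 == v.2) || (v.2.+1 == u.2)) then Some n2
  else None.

Lemma label_sym u v : label u v = label v u.
Proof.
rewrite /label; have [uv | _] := eqVneq (u.1.+1 : nat) v.1.
  by have -> : (v.1.+1 == u.1 :> nat) = false by lia.
by case: eqVneq => //= _; rewrite eq_sym orbC.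
Qed.

Lemma label_edge u v k : label u v = Some k -> u != v /\ adjV u v.
Proof.
rewrite /label /lex_adj /path_adj.
have [uv _ | _] := eqVneq (u.1.+1 : nat) v.1.
  by split=> //; apply: contra_eq_neq uv => ->; lia.
have [vu _ | _] := eqVneq (v.1.+1 : nat) u.1.
  by rewrite orbT; split=> //; apply: contra_eq_neq vu => ->; lia.
case: andP => // -[_ vert] _; split=> //.
by apply: contraTneq vert => ->; lia.
Qed.

Definition edge_class (k : nat) : {set {set V}} :=
  [set [set p.1; p.2] | p in [set p : V * V | label p.1 p.2 == Some k]].

Lemma edge_class_hadj u v k : label u v = Some k -> hadj (edge_class k) u v.
Proof.
move=> uvk; have [uv _] := label_edge uvk.
by rewrite /hadj uv; apply/imsetP; exists (u, v); rewrite ?inE ?uvk.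
Qed.

Lemma edge_class_edges k e : e \in edge_class k ->
  exists x y, [/\ e = [set x; y], x != y & adjV x y].
Proof.
case/imsetP=> p; rewrite inE => /eqP /label_edge [xy axy] ->.
by exists p.1, p.2.
Qed.

Lemma edge_class_disjoint k k' : k != k' -> [disjoint edge_class k & edge_class k'].
Proof.
move=> kk'; apply/pred0P => e /=; apply/negP => /andP [].
case/imsetP=> p; rewrite inE => /eqP pk ->; case/imsetP=> q; rewrite inE => /eqP qk.
move=> /eq_set2 pq; have : label p.1 p.2 = label q.1 q.2.
  by case: pq => -[-> ->]; rewrite // label_sym.
by rewrite pk qk => -[] /eqP; rewrite (negbTE kk').
Qed.

Lemma label_cross (u v : V) : u.1.+1 = v.1 :> nat -> label u v = Some (cross_label u v).
Proof. by rewrite /label => ->; rewrite eqxx. Qed.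

Lemma label_vertical (u v : V) :
  u.1 = v.1 -> u.2.+1 = v.2 :> nat -> label u v = Some n2.
Proof.
move=> e1 e2; rewrite /label e1 e2 !eqxx.
by have -> : (v.1.+1 == v.1 :> nat) = false by lia.
Qed.

Lemma extra_column_conn (i : 'I_n1) (j j' : 'I_n2) :
  connect (hadj (edge_class n2)) (i, j) (i, j').
Proof.
apply: (connect_ord_walk (f := fun j : 'I_n2 => (i, j))) => [|k k' kk'].
  exact: hadj_sym.
by apply: edge_class_hadj; apply: label_vertical.
Qed.

Hypothesis lonely_gap : separates g -> lonely_column g /\ lonely_column g.+1.

(* Across every gap separating S some cross edge is in the extra class: one
   that continues no spine and has no end in S on the hanging side.  Off the
   gap g a row of the far column avoids S; at g both columns are lonely. *)
Lemma extra_crossing (i k : 'I_n1) : i.+1 = k :> nat -> separates i ->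
  exists j j', label (i, j) (k, j') = Some n2.
Proof.
move=> ik [[x xS xi] [y yS iy]].
suff [j [j' jj']] : exists j j', cross_label (i, j) (k, j') = n2.
  by exists j, j'; rewrite label_cross ?jj'.
rewrite /cross_label /next_row /=; case: (ltngtP i g) => ig.
- have [j jS] : exists j, (i, j) \notin S.
    by apply: free_row yS _; rewrite -val_eqE /=; lia.
  have [j' [jj' _]] := row_avoiding j j.
  exists j, j'; rewrite (negbTE jj') (negbTE jS) /=.
  by rewrite (_ : g < k = false) ?andbF //; lia.
- have [j' j'S] : exists j', (k, j') \notin S.
    by apply: free_row xS _; rewrite -val_eqE /=; lia.
  have [j [jj' _]] := row_avoiding j' j'.
  by exists j, j'; rewrite eq_sym (negbTE jj') (negbTE j'S) /= andbF.
- have [lonely_g lonely_g1] : lonely_column g /\ lonely_column g.+1.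
    by apply: lonely_gap; rewrite -ig; split; [exists x | exists y].
  have [r0 r0S] := lonely_row lonely_g; have [r1 r1S] := lonely_row lonely_g1.
  have [j [jr0 _]] := row_avoiding r0 r0.
  have [j' [j'r1 j'j]] := row_avoiding r1 (tau j).
  exists j, j'; rewrite (negbTE j'j).
  have -> : ((i, j) \in S) = false.
    by apply: contraNF jr0 => /r0S <-; rewrite ?ig.
  have -> // : ((k, j') \in S) = false.
  by apply: contraNF j'r1 => /r1S <-; rewrite //= -ik ig.
Qed.

(* The extra class reaches all of S from the vertex of S in the leftmost
   column: between the columns of S every gap separates S. *)
Lemma extra_class_reaches :
  exists z, forall s, s \in S -> connect (hadj (edge_class n2)) z s.
Proof.
have /set0Pn [x1 x1S] : S != set0 by rewrite -card_gt0 S3.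
case: (arg_minnP (fun x : V => nat_of_ord x.1) x1S) => z zS zmin.
exists z => s sS; rewrite [s]surjective_pairing.
pose P (k : 'I_n1) := forall j, connect (hadj (edge_class n2)) z (k, j).
apply: (ord_interval_ind (P := P)) (zmin s sS) _ _ s.2.
  by move=> j; have := extra_column_conn z.1 z.2 j; rewrite -surjective_pairing.
move=> k k' kk' zk k's Pk j.
have sep : separates k by split; [exists z | exists s => //; rewrite kk'].
have [j0 [j1 crossing]] := extra_crossing kk' sep.
apply: connect_trans (Pk j0) (connect_trans (connect1 (edge_class_hadj crossing)) _).
exact: extra_column_conn.
Qed.

Hypothesis gap_lt : g.+1 < n1.
Hypothesis gap_rows : forall u v : V, u \in S -> v \in S ->
  u.1 = g :> nat -> v.1 = g.+1 :> nat -> tau u.2 = v.2.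

Lemma spine_conn (t : 'I_n2) (i i' : 'I_n1) :
  connect (hadj (edge_class t)) (i, spine i t) (i', spine i' t).
Proof.
apply: (connect_ord_walk (f := fun i : 'I_n1 => (i, spine i t))) => [|k k' kk'].
  exact: hadj_sym.
apply: edge_class_hadj; rewrite label_cross // /cross_label /=.
by rewrite next_row_spine kk' eqxx spineK.
Qed.

Lemma hang_before (t : 'I_n2) (c c' : 'I_n1) (r : 'I_n2) :
  (c, r) \in S -> c <= g -> c.+1 = c' :> nat -> r != spine c t ->
  label (c, r) (c', spine c' t) = Some (t : nat).
Proof.
move=> crS cg cc' r_off; rewrite label_cross // /cross_label /= crS cg -cc' spineK.
by rewrite -next_row_spine (inj_eq (@next_row_inj _)) eq_sym (negbTE r_off).
Qed.

(* A vertex (c, r) of S off the spine of t, after the gap, hangs on the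
   spine of t in column c-1; if (c-1, spine) is itself in S, the choice of
   the swapped rows a, b puts (c, r) on the spine. *)
Lemma hang_after (t : 'I_n2) (c c' : 'I_n1) (r : 'I_n2) :
  (c, r) \in S -> g < c -> c'.+1 = c :> nat -> r != spine c t ->
  label (c', spine c' t) (c, r) = Some (t : nat).
Proof.
move=> crS gc c'c r_off; rewrite label_cross // /cross_label /=.
rewrite next_row_spine c'c (negbTE r_off) crS gc spineK.
case: ifP => // /andP [c'S c'g].
have c'g' : c' = g :> nat by lia.
have cg1 : c = g.+1 :> nat by rewrite -c'c c'g'.
have := gap_rows c'S crS c'g' cg1.
have -> /= : tau (spine c' t) = next_row c' (spine c' t) by rewrite /next_row c'g' eqxx.
by rewrite next_row_spine c'c => spine_r; rewrite spine_r eqxx in r_off.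
Qed.

Lemma spine_class_reaches (t : 'I_n2) (i0 : 'I_n1) (s : V) :
  s \in S -> connect (hadj (edge_class t)) (i0, spine i0 t) s.
Proof.
case: s => c r crS.
have [-> | r_off] := eqVneq r (spine c t); first exact: spine_conn.
have [cg | gc] := leqP c g.
- have c1 : c.+1 < n1 by lia.
  apply: connect_trans (spine_conn t i0 (Ordinal c1)) (connect1 _).
  by rewrite hadj_sym; apply: edge_class_hadj; apply: hang_before.
- have c1 : c.-1 < n1 by have := ltn_ord c; lia.
  apply: connect_trans (spine_conn t i0 (Ordinal c1)) (connect1 _).
  by apply: edge_class_hadj; apply: hang_after => //=; lia.
Qed.

Lemma gap_trees : has_disjoint_S_trees adjV S n2.+1.
Proof.
apply: (disjoint_S_trees_of_classes (C := fun k : 'I_n2.+1 => edge_class k)).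
  by move=> i j ij; apply: edge_class_disjoint.
move=> k; have [kn | nk] := ltnP k n2.
- have i0 : 0 < n1 by lia.
  apply: (S_tree_within (z := (Ordinal i0, spine 0 (Ordinal kn)))).
    exact: edge_class_edges.
  by move=> s sS; apply: (spine_class_reaches (Ordinal kn) (Ordinal i0)).
- have -> : (k : nat) = n2 by have := ltn_ord k; lia.
  have [z zS] := extra_class_reaches.
  by apply: (S_tree_within (z := z)); first exact: edge_class_edges.
Qed.

End Gap.

(* Choose a
   good gap g; if S meets both columns g and g+1, in one vertex each, swap
   their rows a and b after the gap so that this vertex pair is a spine
   edge. *)
Lemma lower_bound : has_disjoint_S_trees adjV S n2.+1.
Proof.
have [g [gn lonely]] := gap_choice.
case: (pickP [pred p : V * V | [&& p.1 \in S, p.2 \in S,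
    p.1.1 == g :> nat & p.2.1 == g.+1 :> nat]]) => [p | none].
  case/and4P=> p1S p2S /eqP p1g /eqP p2g.
  apply: (gap_trees (a := p.1.2) (b := p.2.2) lonely gn) => u v uS vS ug vg.
  have [lonely_g lonely_g1] : lonely_column g /\ lonely_column g.+1.
    by apply: lonely; split; [exists u; rewrite ?ug | exists v; rewrite ?vg].
  by rewrite (lonely_g u p.1) // (lonely_g1 v p.2) // /tau eqxx.
have r0 : 0 < n2 by lia.
apply: (gap_trees (a := Ordinal r0) (b := Ordinal r0) lonely gn).
by move=> u v uS vS ug vg; have := none (u, v); rewrite /= uS vS ug vg !eqxx.
Qed.

End FixedS.

(* Upper bound: S = {(0,0), (0,1), (0,2)} has at most n2 + 1 edge-disjoint
   S-trees, as (0,0) has only the neighbours (0,1) and (1,j), j < n2. *)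
Lemma upper_bound : exists S : {set V},
  #|S| = 3 /\ forall k, has_disjoint_S_trees adjV S k -> k <= n2.+1.
Proof.
have [c0 c1 r0 r1 r2] : [/\ 0 < n1, 1 < n1, 0 < n2, 1 < n2 & 2 < n2] by split; lia.
pose x0 : V := (Ordinal c0, Ordinal r0); pose x1 : V := (Ordinal c0, Ordinal r1).
exists [set x0; x1; (Ordinal c0, Ordinal r2)]; split.
  by rewrite -setUA !cardsU1 cards1 !inE !xpair_eqE -!val_eqE.
move=> k trees; pose N := x1 |: [set (Ordinal c1, j) | j in 'I_n2].
apply: leq_trans (_ : #|N| <= n2.+1); last first.
  rewrite cardsU1 card_imset ?card_ord; last by move=> j j' [].
  by case: (_ \notin _).
apply: (disjoint_S_trees_le_degree (c := x0) (w := x1) _ _ _ _ _ trees).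
- exact: adjV_sym.
- by rewrite !inE eqxx.
- by rewrite !inE eqxx orbT.
- by rewrite !xpair_eqE -!val_eqE.
case=> i j; rewrite /lex_adj /path_adj /= in_setU1.
case/orP=> [/orP [/eqP ci | //] | /andP [/eqP ci /orP [/eqP rj | //]]].
  apply/orP; right; apply/imsetP; exists j => //.
  by congr pair; apply: val_inj; rewrite /= ci.
by rewrite -ci; apply/orP; left; apply/eqP; congr pair; apply: val_inj; rewrite /= -rj.
Qed.

End PathProduct.

Unset Implicit Arguments.

Theorem corollary3p5 (n1 n2 : nat) :
  3 <= n1 -> 3 <= n2 ->
  lambda3_is (lex_adj (path_adj n1) (path_adj n2)) n2.+1.
Proof.
move=> n1_ge3 n2_ge3.
have [S0 [S0_3 S0_le]] := upper_bound n1_ge3 n2_ge3.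
split.
- by exists S0; split=> //; split=> [|k]; [exact: lower_bound | exact: S0_le].
- by move=> S k S3 [_ maxk]; apply: maxk; apply: lower_bound.
Qed.
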